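(* Let $p\in[1,2]$, $p^*=\frac{p}{p-1}$ ($p^*=\infty$ if $p=1$), and let $m\ge2$ be an integer. Then for every $N\in\mathbb{N}$ and every real array $(y_{i_1\dots i_m})_{i_1,\dots,i_m=1}^N$, \[ \left(\sum_{i_1,\dots,i_m=1}^N|y_{i_1\dots i_m}|^2\right)^{1/2}\le D_{(m+1),p^*}\left(\int_{[0,1]^m}\left|\sum_{i_1,\dots,i_m=1}^N r_{i_1}(t_1)\cdots r_{i_m}(t_m)y_{i_1\dots i_m}\right|^p dt_1\cdots dt_m\right)^{1/p}. \] Consequently $(\mathrm{A}_p)^m\le D_{(m+1),p^*}$.
   Context: Scalars are real. $X_q=\ell_q$ for $1\le q<\infty$, $X_\infty=c_0$, $(e_k)$ canonical unit vectors; $\|T\|$ is the supremum of $|T(x^{(1)},\dots,x^{(M)})|$ over the product of the closed unit balls. $r_j(t)=\operatorname{sign}(\sin(2^j\pi t))$ are the Rademacher functions. For $0<r<\infty$, $\mathrm{A}_r$ is the optimal constant such that $\left(\sum_{j=1}^n|a_j|^2\right)^{1/2}\le \mathrm{A}_r\left(\int_0^1|\sum_{j=1}^n a_jr_j(t)|^rdt\right)^{1/r}$ for all $n$ and real $a_j$. For an integer $M\ge3$ and $q\in[2,\infty]$, $D_{(M),q}$ denotes the optimal constant $D$ such that $\left(\sum_{i_2,\dots,i_M}\left(\sum_{i_1}|T(e_{i_1},\dots,e_{i_M})|^{\frac{q}{q-1}}\right)^{2\frac{q-1}{q}}\right)^{1/2}\le D\|T\|$ for all continuous $M$-linear $T:X_q\times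 X_\infty\times\cdots\times X_\infty\to\mathbb{R}$ ($q/(q-1)$ read as $1$ when $q=\infty$). *)

From Stdlib Require Import Reals Lra.
Open Scope R_scope.

(* x^r for x >= 0 and r > 0, with 0^r = 0 (Rpower alone gives Rpower 0 r = 1). *)
Definition pw (x r : R) : R := if Rle_dec x 0 then 0 else Rpower x r.

Fixpoint fsum (n : nat) (f : nat -> R) : R :=
  match n with O => 0 | S n' => fsum n' f + f n' end.
Fixpoint fprod (n : nat) (f : nat -> R) : R :=
  match n with O => 1 | S n' => fprod n' f * f n' end.

Definition scons {A : Type} (a : A) (s : nat -> A) : nat -> A :=
  fun j => match j with O => a | S j' => s j' end.

(* sum over multi-indices i = (i_0,...,i_{k-1}) with all i_j < n
   (coordinates >= k are set to 0) *)
Fixpoint msum (k n : nat) (f : (nat -> nat) -> R) : R :=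
  match k with
  | O => f (fun _ => O)
  | S k' => fsum n (fun a => msum k' n (fun i => f (scons a i)))
  end.

Definition Rsign (x : R) : R :=
  if Rlt_dec 0 x then 1 else if Rlt_dec x 0 then -1 else 0.
Definition rad (j : nat) (t : R) : R := Rsign (sin (2 ^ j * PI * t)).

Definition RInt01 (g : R -> R) (I : R) : Prop :=
  exists pr : Riemann_integrable g 0 1, RiemannInt pr = I.

Fixpoint IterInt (m : nat) (F : (nat -> R) -> R) (I : R) : Prop :=
  match m with
  | O => F (fun _ => 0) = I
  | S m' => exists g : R -> R, RInt01 g I /\
      forall t, 0 <= t <= 1 -> IterInt m' (fun s => F (scons t s)) (g t)
  end.

Definition A_valid (r A : R) : Prop :=
  forall (n : nat) (a : nat -> R) (I : R),
    RInt01 (fun t => pw (Rabs (fsum n (fun k => a (S k) * rad (S k) t))) r) I ->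
    sqrt (fsum n (fun k => a (S k) ^ 2)) <= A * pw I (1 / r).
Definition A_opt (r A : R) : Prop :=
  A_valid r A /\ forall A', A_valid r A' -> A <= A'.

Inductive qexp := Fin (q : R) | Inf.
Definition conj_exp (p : R) : qexp :=
  if Req_dec_T p 1 then Inf else Fin (p / (p - 1)).
Definition dual_exp (q : qexp) : R :=
  match q with Fin q => q / (q - 1) | Inf => 1 end.

(* the spaces X_q (ell_q, or c_0 for q = infinity) and their closed unit balls *)
Definition inX (q : qexp) (x : nat -> R) : Prop :=
  match q with
  | Fin q => exists l, infinite_sum (fun k => pw (Rabs (x k)) q) l
  | Inf => Un_cv x 0
  end.
Definition inBall (q : qexp) (x : nat -> R) : Prop :=
  match q with
  | Fin q => exists l, infinite_sum (fun k => pw (Rabs (x k)) q) l /\ l <= 1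
  | Inf => Un_cv x 0 /\ forall k, Rabs (x k) <= 1
  end.

(* slot j of T : X_q x X_oo x ... x X_oo *)
Definition slot (q : qexp) (j : nat) : qexp := match j with O => q | _ => Inf end.

Definition upd (x : nat -> nat -> R) (j : nat) (w : nat -> R) : nat -> nat -> R :=
  fun k => if Nat.eqb k j then w else x k.

(* M-linear forms T, argument x j = j-th vector (j < M) *)
Definition multilinear (M : nat) (q : qexp) (T : (nat -> nat -> R) -> R) : Prop :=
  (forall x x', (forall j, (j < M)%nat -> x j = x' j) -> T x = T x') /\
  (forall (j : nat) (x : nat -> nat -> R) (u v : nat -> R) (a b : R),
     (j < M)%nat ->
     (forall k, (k < M)%nat -> k <> j -> inX (slot q k) (x k)) ->
     inX (slot q j) u -> inX (slot q j) v ->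
     T (upd x j (fun i => a * u i + b * v i)) = a * T (upd x j u) + b * T (upd x j v)).

(* continuity of a multilinear form = boundedness on the product of unit balls *)
Definition bounded_form (M : nat) (q : qexp) (T : (nat -> nat -> R) -> R) : Prop :=
  exists C, forall x, (forall j, (j < M)%nat -> inBall (slot q j) (x j)) -> Rabs (T x) <= C.

Definition normT (M : nat) (q : qexp) (T : (nat -> nat -> R) -> R) (s : R) : Prop :=
  is_lub (fun v => exists x, (forall j, (j < M)%nat -> inBall (slot q j) (x j)) /\ v = Rabs (T x)) s.

Definition e (k : nat) : nat -> R := fun i => if Nat.eqb i k then 1 else 0.

(* truncation (all indices < n) of the mixed-norm expression
   ( sum_{i_2..i_M} ( sum_{i_1} |T(e_{i_1},...,e_{i_M})|^{q'} )^{2/q'} )^{1/2} *)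
Definition mixed_trunc (M : nat) (q : qexp) (T : (nat -> nat -> R) -> R) (n : nat) : R :=
  let q' := dual_exp q in
  pw (msum (M - 1) n (fun i' =>
        pw (fsum n (fun i1 => pw (Rabs (T (fun j => e (scons i1 i' j)))) q')) (2 / q')))
     (1 / 2).

(* D valid: the (possibly infinite) sum is <= D ||T|| ; for nonnegative terms this
   is the same as all truncations being <= D ||T|| *)
Definition D_valid (M : nat) (q : qexp) (D : R) : Prop :=
  forall T, multilinear M q T -> bounded_form M q T ->
  forall s, normT M q T s -> forall n, mixed_trunc M q T n <= D * s.
Definition D_opt (M : nat) (q : qexp) (D : R) : Prop :=
  D_valid M q D /\ forall D', D_valid M q D' -> D <= D'.

From Stdlib Require Import Reals.
From Stdlib Require Import List Lra Lia Psatz FunctionalExtensionality.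
From Coquelicot Require Import Coquelicot.
Open Scope R_scope.

(** For a fixed array [y], consider the [(m+1)]-linear form on [X_{p*} x c_0 x ... x c_0]
      [T(x_0, x_1, ..., x_m) = Σ_ε x_0(ε) 2^(-mN/p) Σ_i ε_(1,i_1) x_1(i_1) ... ε_(m,i_m) x_m(i_m) y_i],
    the outer sum running over the [2^(mN)] sign matrices [ε].  Every column [i_1] of its
    coefficient array has [2^(mN)] entries of modulus [2^(-mN/p) |y_i|], so its mixed
    [(ell_p, ell_2)] norm is [||y||_2].  On the other hand [T] is affine in each entry of
    [x_1, ..., x_m], so [|T|] is maximal on the product of balls when these entries are [+-1];
    there Hölder's inequality in [x_0] and the invariance of averages over signs under flips give
    [||T|| <= (avg_ε |Σ_i ε_(1,i_1) ... ε_(m,i_m) y_i|^p)^(1/p)], which is the [L_p] norm of the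
    Rademacher chaos.  Hence [||y||_2 <= D ||T||] is the claimed inequality.  For the product
    array [y_i = a_(i_1) ... a_(i_m)] both sides are [m]-th powers of the two sides of
    Khintchine's inequality, whence [A_p^m <= D]. *)

Lemma fsum_ext n f g : (forall a, (a < n)%nat -> f a = g a) -> fsum n f = fsum n g.
Proof. induction n; simpl; intros H; [reflexivity|]. rewrite IHn, H; auto. Qed.

Lemma fsum_lin n c d f g :
  fsum n (fun a => c * f a + d * g a) = c * fsum n f + d * fsum n g.
Proof. induction n; simpl; [ring|]. rewrite IHn; ring. Qed.

Lemma fsum_plus n f g : fsum n (fun a => f a + g a) = fsum n f + fsum n g.
Proof. induction n; simpl; [ring|]. rewrite IHn; ring. Qed.

Lemma fsum_scal n c f : fsum n (fun a => c * f a) = c * fsum n f.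
Proof. induction n; simpl; [ring|]. rewrite IHn; ring. Qed.

Lemma fsum_const n c : fsum n (fun _ => c) = INR n * c.
Proof. induction n; simpl fsum; [simpl; ring|]. rewrite IHn, S_INR; ring. Qed.

Lemma fsum_le n f g : (forall a, (a < n)%nat -> f a <= g a) -> fsum n f <= fsum n g.
Proof.
  induction n; simpl; intros H; [lra|].
  pose proof (H n (Nat.lt_succ_diag_r n)).
  assert (fsum n f <= fsum n g) by (apply IHn; auto). lra.
Qed.

Lemma fsum_nonneg n f : (forall a, (a < n)%nat -> 0 <= f a) -> 0 <= fsum n f.
Proof.
  intros H. replace 0 with (fsum n (fun _ => 0)) by (rewrite fsum_const; ring).
  apply fsum_le; auto.
Qed.

Lemma fsum_eq0_nonneg n f : (forall a, (a < n)%nat -> 0 <= f a) ->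
  fsum n f = 0 -> forall a, (a < n)%nat -> f a = 0.
Proof.
  induction n; intros H E a Ha; [lia|]. simpl in E.
  assert (0 <= fsum n f) by (apply fsum_nonneg; auto).
  assert (0 <= f n) by auto.
  destruct (Nat.eq_dec a n); [subst; lra|]. apply IHn; auto; lia || lra.
Qed.

Lemma fsum_abs n f : Rabs (fsum n f) <= fsum n (fun a => Rabs (f a)).
Proof.
  induction n; simpl; [rewrite Rabs_R0; lra|].
  eapply Rle_trans; [apply Rabs_triang|]. lra.
Qed.

Lemma fsum_double n f :
  fsum (2 * n) f = fsum n (fun d => f (2 * d)%nat + f (2 * d + 1)%nat).
Proof.
  induction n; [reflexivity|].
  replace (2 * S n)%nat with (S (S (2 * n))) by lia.
  change (fsum (S (S (2 * n))) f) with (fsum (2 * n) f + f (2 * n)%nat + f (S (2 * n))).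
  change (fsum (S n) (fun d => f (2 * d)%nat + f (2 * d + 1)%nat)) with
    (fsum n (fun d => f (2 * d)%nat + f (2 * d + 1)%nat) + (f (2 * n)%nat + f (2 * n + 1)%nat)).
  rewrite IHn. replace (2 * n + 1)%nat with (S (2 * n)) by lia. ring.
Qed.

Lemma fsum_delta N b (X : nat -> R) :
  fsum N (fun a => e b a * X a) = (if Nat.ltb b N then 1 else 0) * X b.
Proof.
  unfold e. induction N; simpl; [ring|]. rewrite IHN.
  destruct (Nat.eqb N b) eqn:E.
  - apply Nat.eqb_eq in E; subst.
    rewrite (proj2 (Nat.ltb_ge b b)), (proj2 (Nat.ltb_lt b (S b))) by lia. ring.
  - apply Nat.eqb_neq in E. destruct (Nat.ltb b N) eqn:E1.
    + apply Nat.ltb_lt in E1. rewrite (proj2 (Nat.ltb_lt b (S N))) by lia. ring.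
    + apply Nat.ltb_ge in E1. rewrite (proj2 (Nat.ltb_ge b (S N))) by lia. ring.
Qed.

Definition ind_lt (N a : nat) : R := if Nat.ltb a N then 1 else 0.

Lemma ind_lt_01 N a : ind_lt N a = 0 \/ ind_lt N a = 1.
Proof. unfold ind_lt; destruct Nat.ltb; auto. Qed.

Lemma fsum_ind_lt N n (X : nat -> R) : (N <= n)%nat ->
  fsum n (fun a => ind_lt N a * X a) = fsum N X.
Proof.
  unfold ind_lt. intros H. induction n; [replace N with O by lia; reflexivity|].
  destruct (Nat.eq_dec N (S n)).
  - subst. simpl. rewrite (proj2 (Nat.ltb_lt n (S n))) by lia.
    f_equal; [|ring]. apply fsum_ext. intros a Ha.
    rewrite (proj2 (Nat.ltb_lt a (S n))) by lia. ring.
  - simpl. rewrite IHn by lia. rewrite (proj2 (Nat.ltb_ge n N)) by lia. ring.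
Qed.

Lemma fprod_ext n f g : (forall k, (k < n)%nat -> f k = g k) -> fprod n f = fprod n g.
Proof. induction n; simpl; intros H; [reflexivity|]. rewrite IHn, H; auto. Qed.

Lemma fprod_S n f : fprod (S n) f = f O * fprod n (fun k => f (S k)).
Proof.
  induction n; [simpl; ring|].
  change (fprod (S (S n)) f) with (fprod (S n) f * f (S n)). rewrite IHn. simpl. ring.
Qed.

Lemma fprod_mult n f g : fprod n (fun k => f k * g k) = fprod n f * fprod n g.
Proof. induction n; simpl; [ring|]. rewrite IHn; ring. Qed.

Lemma fprod_const n c : fprod n (fun _ => c) = c ^ n.
Proof. induction n; simpl; auto. rewrite IHn; ring. Qed.

Lemma fprod_abs n f : Rabs (fprod n f) = fprod n (fun k => Rabs (f k)).
Proof. induction n; simpl; [apply Rabs_R1|]. rewrite Rabs_mult, IHn; ring. Qed.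

Lemma fprod_nonneg n f : (forall k, 0 <= f k) -> 0 <= fprod n f.
Proof. intros H. induction n; simpl; [lra|]. apply Rmult_le_pos; auto. Qed.

Lemma fprod_sign n f : (forall k, (k < n)%nat -> f k = 1 \/ f k = -1) ->
  Rabs (fprod n f) = 1.
Proof.
  intros H. rewrite fprod_abs, <- (pow1 n), <- fprod_const.
  apply fprod_ext. intros k Hk.
  destruct (H k Hk) as [E|E]; rewrite E; [apply Rabs_R1|]. rewrite Rabs_left; lra.
Qed.

Lemma fprod_01 n f : (forall k, f k = 0 \/ f k = 1) -> fprod n f = 0 \/ fprod n f = 1.
Proof.
  intros H. induction n; simpl; auto.
  destruct IHn as [E|E], (H n) as [E'|E']; rewrite E, E'; lra.
Qed.

Lemma fprod_affine m k0 (f g h : nat -> R) a b : (k0 < m)%nat ->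
  (forall k, (k < m)%nat -> k <> k0 -> f k = g k /\ f k = h k) ->
  f k0 = a * g k0 + b * h k0 ->
  fprod m f = a * fprod m g + b * fprod m h.
Proof.
  induction m; intros Hk H H0; [lia|]. simpl.
  destruct (Nat.eq_dec k0 m).
  - subst. rewrite H0, (fprod_ext m f g), (fprod_ext m h g); [ring| |];
      intros k Hk'; destruct (H k ltac:(lia) ltac:(lia)); congruence.
  - rewrite IHm by (auto; lia). destruct (H m ltac:(lia) ltac:(lia)) as [E1 E2].
    rewrite E1. replace (h m) with (g m) by congruence. ring.
Qed.

Lemma msum_ext m N F G :
  (forall i, (forall k, (k < m)%nat -> (i k < N)%nat) ->
             (forall k, (m <= k)%nat -> i k = O) -> F i = G i) ->
  msum m N F = msum m N G.
Proof.
  revert F G; induction m; intros F G H; simpl.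
  - apply H; intros; [lia|reflexivity].
  - apply fsum_ext; intros a Ha. apply IHm. intros i Hi Hz. apply H.
    + intros [|k] Hk; simpl; auto. apply Hi; lia.
    + intros [|k] Hk; simpl; [lia|]. apply Hz; lia.
Qed.

Lemma msum_lin m N c d F G :
  msum m N (fun i => c * F i + d * G i) = c * msum m N F + d * msum m N G.
Proof.
  revert F G; induction m; intros F G; simpl; [reflexivity|].
  rewrite <- fsum_lin. apply fsum_ext; intros. apply IHm.
Qed.

Lemma msum_scal m N c F : msum m N (fun i => c * F i) = c * msum m N F.
Proof.
  revert F; induction m; intros F; simpl; [reflexivity|].
  rewrite <- fsum_scal. apply fsum_ext; intros. apply IHm.
Qed.

Lemma msum_nonneg m N F : (forall i, 0 <= F i) -> 0 <= msum m N F.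
Proof.
  revert F; induction m; intros F H; simpl; auto.
  apply fsum_nonneg; intros. apply IHm; auto.
Qed.

Lemma msum_const1 m : msum m 1 (fun _ => 1) = 1.
Proof. induction m; simpl; auto. rewrite IHm; ring. Qed.

Lemma msum_prod m N (g : nat -> nat -> R) :
  msum m N (fun i => fprod m (fun k => g k (i k))) = fprod m (fun k => fsum N (g k)).
Proof.
  revert g; induction m; intros g; [reflexivity|].
  cbn [msum]. rewrite fprod_S.
  rewrite (fsum_ext N _ (fun a => fprod m (fun k => fsum N (g (S k))) * g O a)).
  - rewrite fsum_scal. ring.
  - intros a _. rewrite <- (IHm (fun k => g (S k))), Rmult_comm, <- msum_scal.
    apply msum_ext. intros i _ _. rewrite fprod_S. simpl. ring.
Qed.

Lemma msum_delta m N (j : nat -> nat) F : (forall k, (m <= k)%nat -> j k = O) ->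
  msum m N (fun i => fprod m (fun k => e (j k) (i k)) * F i) =
  fprod m (fun k => ind_lt N (j k)) * F j.
Proof.
  revert N j F; induction m; intros N j F Hj.
  - simpl. f_equal. f_equal. apply functional_extensionality; intros k. rewrite Hj; auto; lia.
  - cbn [msum].
    rewrite (fsum_ext N _ (fun a => e (j O) a *
               msum m N (fun i => fprod m (fun k => e (j (S k)) (i k)) * F (scons a i)))).
    + rewrite (fsum_ext N _ (fun a => e (j O) a *
                 (fprod m (fun k => ind_lt N (j (S k))) * F (scons a (fun k => j (S k)))))).
      * rewrite fsum_delta, fprod_S. fold (ind_lt N (j O)).
        replace (scons (j O) (fun k => j (S k))) with j; [ring|].
        apply functional_extensionality; intros [|k]; reflexivity.
      * intros a _. f_equal. apply (IHm N (fun k => j (S k)) (fun i => F (scons a i))).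
        intros; apply Hj; lia.
    + intros a _. rewrite <- msum_scal. apply msum_ext. intros i _ _.
      rewrite fprod_S. simpl. ring.
Qed.

Lemma msum_ind_lt m n N F : (N <= n)%nat ->
  msum m n (fun i => fprod m (fun k => ind_lt N (i k)) * F i) = msum m N F.
Proof.
  revert F; induction m; intros F H; [simpl; ring|].
  cbn [msum].
  rewrite (fsum_ext n _ (fun a => ind_lt N a * msum m N (fun i => F (scons a i)))).
  - apply fsum_ind_lt; auto.
  - intros a _. rewrite <- (IHm (fun i => F (scons a i))) by auto. rewrite <- msum_scal.
    apply msum_ext. intros i _ _. rewrite fprod_S. simpl. ring.
Qed.

Lemma pw_nonneg x r : 0 <= pw x r.
Proof. unfold pw; destruct Rle_dec; [lra|]. left; apply exp_pos. Qed.

Lemma pw_0 r : pw 0 r = 0.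
Proof. unfold pw; destruct Rle_dec; lra. Qed.

Lemma pw_pos x r : 0 < x -> pw x r = Rpower x r.
Proof. unfold pw; destruct Rle_dec; lra. Qed.

Lemma Rpower_1_l y : Rpower 1 y = 1.
Proof. unfold Rpower. rewrite ln_1, Rmult_0_r. apply exp_0. Qed.

Lemma pw_mult x y r : 0 <= x -> 0 <= y -> pw (x * y) r = pw x r * pw y r.
Proof.
  intros Hx Hy.
  destruct (Req_dec x 0); [subst; rewrite Rmult_0_l, pw_0; ring|].
  destruct (Req_dec y 0); [subst; rewrite Rmult_0_r, pw_0; ring|].
  rewrite !pw_pos by nra. rewrite Rpower_mult_distr; auto; lra.
Qed.

Lemma pw_pw x a b : 0 <= x -> pw (pw x a) b = pw x (a * b).
Proof.
  intros Hx. destruct (Req_dec x 0); [subst; rewrite !pw_0; auto|].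
  rewrite (pw_pos x a) by lra. rewrite !pw_pos by (apply exp_pos || lra).
  apply Rpower_mult.
Qed.

Lemma pw_1 x : 0 <= x -> pw x 1 = x.
Proof.
  intros Hx. destruct (Req_dec x 0); [subst; apply pw_0|].
  rewrite pw_pos by lra. apply Rpower_1; lra.
Qed.

Lemma pw_2 x : 0 <= x -> pw x 2 = x ^ 2.
Proof.
  intros Hx. destruct (Req_dec x 0); [subst; rewrite pw_0; ring|].
  rewrite pw_pos by lra. replace 2 with (INR 2) by (simpl; ring). apply Rpower_pow; lra.
Qed.

Lemma pw_half x : 0 <= x -> pw x (1 / 2) = sqrt x.
Proof.
  intros Hx. destruct (Req_dec x 0); [subst; rewrite pw_0, sqrt_0; auto|].
  rewrite pw_pos by lra. replace (1 / 2) with (/ 2) by field. apply Rpower_sqrt; lra.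
Qed.

Lemma pw_eq0 x r : 0 <= x -> pw x r = 0 -> x = 0.
Proof.
  intros Hx H. destruct (Req_dec x 0); auto.
  rewrite pw_pos in H by lra. pose proof (exp_pos (r * ln x)). unfold Rpower in H. lra.
Qed.

Lemma pw_01_mult c Y r : c = 0 \/ c = 1 -> pw (c * Y) r = c * pw Y r.
Proof. intros [E|E]; subst; [rewrite Rmult_0_l, pw_0; ring|rewrite !Rmult_1_l; auto]. Qed.

Lemma pw_fprod m (f : nat -> R) r : (forall k, 0 <= f k) ->
  pw (fprod m f) r = fprod m (fun k => pw (f k) r).
Proof.
  intros H. induction m; simpl.
  - rewrite pw_pos by lra. apply Rpower_1_l.
  - rewrite pw_mult by (auto; apply fprod_nonneg; auto). rewrite IHm. auto.
Qed.

Lemma pw_pow x n r : 0 <= x -> pw (x ^ n) r = pw x r ^ n.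
Proof. intros Hx. rewrite <- !fprod_const. apply pw_fprod. auto. Qed.

Lemma sqrt_pow x n : 0 <= x -> sqrt (x ^ n) = sqrt x ^ n.
Proof.
  intros Hx. induction n; simpl; [apply sqrt_1|].
  rewrite sqrt_mult, IHn; auto. apply pow_le; auto.
Qed.

(** * Hölder's inequality against the unit ball of [X_{p*}] *)

Lemma exp_convex a b l : 0 <= l <= 1 ->
  exp (l * a + (1 - l) * b) <= l * exp a + (1 - l) * exp b.
Proof.
  intros Hl. set (c := l * a + (1 - l) * b).
  assert (Ea : exp a = exp c * exp (a - c)) by (rewrite <- exp_plus; f_equal; ring).
  assert (Eb : exp b = exp c * exp (b - c)) by (rewrite <- exp_plus; f_equal; ring).
  pose proof (exp_ineq1_le (a - c)). pose proof (exp_ineq1_le (b - c)).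
  pose proof (exp_pos c). rewrite Ea, Eb.
  (* tangent line of [exp] at [c] *)
  assert (exp c * (1 + (a - c)) <= exp c * exp (a - c)) by (apply Rmult_le_compat_l; lra).
  assert (exp c * (1 + (b - c)) <= exp c * exp (b - c)) by (apply Rmult_le_compat_l; lra).
  assert (l * (exp c * (1 + (a - c))) + (1 - l) * (exp c * (1 + (b - c))) = exp c)
    by (unfold c; ring).
  nra.
Qed.

Lemma young u v p : 0 <= u -> 0 <= v -> 1 < p ->
  u * v <= pw u (p / (p - 1)) / (p / (p - 1)) + pw v p / p.
Proof.
  intros Hu Hv Hp.
  assert (Hq : 0 < p / (p - 1)) by (apply Rdiv_lt_0_compat; lra).
  assert (0 <= pw u (p / (p - 1)) / (p / (p - 1)))
    by (apply Rmult_le_pos; [apply pw_nonneg|left; apply Rinv_0_lt_compat; lra]).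
  assert (0 <= pw v p / p)
    by (apply Rmult_le_pos; [apply pw_nonneg|left; apply Rinv_0_lt_compat; lra]).
  destruct (Req_dec u 0); [subst; lra|]. destruct (Req_dec v 0); [subst; lra|].
  assert (Hl : 0 <= (p - 1) / p <= 1).
  { split; [apply Rmult_le_pos; [lra|left; apply Rinv_0_lt_compat; lra]|].
    apply (Rmult_le_reg_r p); [lra|]. unfold Rdiv. rewrite Rmult_assoc, Rinv_l by lra. lra. }
  rewrite !pw_pos by lra. unfold Rpower.
  pose proof (exp_convex (p / (p - 1) * ln u) (p * ln v) ((p - 1) / p) Hl) as Hc.
  replace ((p - 1) / p * (p / (p - 1) * ln u) + (1 - (p - 1) / p) * (p * ln v))
    with (ln u + ln v) in Hc by (field; lra).
  rewrite exp_plus, !exp_ln in Hc by lra.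
  replace (exp (p / (p - 1) * ln u) / (p / (p - 1)))
    with ((p - 1) / p * exp (p / (p - 1) * ln u)) by (field; lra).
  replace (exp (p * ln v) / p) with ((1 - (p - 1) / p) * exp (p * ln v)) by (field; lra).
  lra.
Qed.

Lemma young_scaled u v p b : 0 <= u -> 0 <= v -> 1 < p -> 0 < b ->
  u * v <= b / (p / (p - 1)) * pw u (p / (p - 1)) + b / (Rpower b p * p) * pw v p.
Proof.
  intros Hu Hv Hp Hb.
  assert (Hib : 0 < / b) by (apply Rinv_0_lt_compat; auto).
  assert (Hbp : 0 < Rpower b p) by apply exp_pos.
  assert (Hinv : pw (/ b) p = / Rpower b p).
  { rewrite pw_pos by auto. apply (Rmult_eq_reg_r (Rpower b p)); [|lra].
    rewrite Rpower_mult_distr, Rinv_l, Rpower_1_l by lra. field. lra. }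
  pose proof (young u (v * / b) p Hu ltac:(apply Rmult_le_pos; lra) Hp) as Y.
  rewrite pw_mult, Hinv in Y by lra.
  apply (Rmult_le_compat_l b) in Y; [|lra].
  replace (b * (u * (v * / b))) with (u * v) in Y by (field; lra).
  eapply Rle_trans; [exact Y|]. right. field. repeat split; lra.
Qed.

Lemma holder K (x h : nat -> R) p : 1 < p ->
  fsum K (fun c => pw (Rabs (x c)) (p / (p - 1))) <= 1 ->
  Rabs (fsum K (fun c => x c * h c)) <= pw (fsum K (fun c => pw (Rabs (h c)) p)) (1 / p).
Proof.
  intros Hp Hx. set (S := fsum K (fun c => pw (Rabs (h c)) p)).
  assert (HS : 0 <= S) by (apply fsum_nonneg; intros; apply pw_nonneg).
  eapply Rle_trans; [apply fsum_abs|].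
  destruct (Req_dec S 0) as [E|E].
  - pose proof (fsum_eq0_nonneg K _ (fun a _ => pw_nonneg (Rabs (h a)) p) E) as Z.
    apply Rle_trans with (fsum K (fun _ => 0)).
    + apply fsum_le. intros a Ha. pose proof (pw_eq0 _ _ (Rabs_pos (h a)) (Z a Ha)) as Za.
      rewrite Rabs_mult, Za. lra.
    + rewrite fsum_const, Rmult_0_r. apply pw_nonneg.
  - set (b := Rpower S (1 / p)). set (q := p / (p - 1)).
    assert (Hb : 0 < b) by apply exp_pos.
    assert (Hq : 0 < q) by (apply Rdiv_lt_0_compat; lra).
    assert (Hbp : Rpower b p = S).
    { unfold b. rewrite Rpower_mult. replace (1 / p * p) with 1 by (field; lra).
      apply Rpower_1; lra. }
    rewrite pw_pos by lra. fold b.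
    apply Rle_trans with
      (fsum K (fun c => b / q * pw (Rabs (x c)) q + b / (S * p) * pw (Rabs (h c)) p)).
    + apply fsum_le. intros c _. rewrite Rabs_mult, <- Hbp.
      apply young_scaled; auto using Rabs_pos.
    + rewrite fsum_lin. fold S.
      assert (b / q * fsum K (fun c => pw (Rabs (x c)) q) <= b / q * 1)
        by (apply Rmult_le_compat_l; auto; apply Rlt_le, Rdiv_lt_0_compat; lra).
      replace (b / (S * p) * S) with (b / p) by (field; lra).
      assert (b / q * 1 + b / p = b) by (unfold q; field; lra). lra.
Qed.

Lemma holder_inf K (x h : nat -> R) : (forall c, Rabs (x c) <= 1) ->
  Rabs (fsum K (fun c => x c * h c)) <= fsum K (fun c => Rabs (h c)).
Proof.
  intros Hx. eapply Rle_trans; [apply fsum_abs|]. apply fsum_le. intros c _.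
  rewrite Rabs_mult. pose proof (Hx c). pose proof (Rabs_pos (h c)). nra.
Qed.

Lemma fsum_sum_f_R0 n f : fsum (S n) f = sum_f_R0 f n.
Proof. induction n; simpl; [ring|]. simpl in IHn. rewrite <- IHn. ring. Qed.

Lemma inBall_fin_partial q v : 0 < q -> inBall (Fin q) v ->
  forall K, fsum K (fun k => pw (Rabs (v k)) q) <= 1.
Proof.
  intros Hq [l [Hl Hl1]] K.
  assert (fsum (S K) (fun k => pw (Rabs (v k)) q) <= l).
  { rewrite fsum_sum_f_R0. apply growing_ineq; auto.
    intros n. simpl. pose proof (pw_nonneg (Rabs (v (S n))) q). lra. }
  simpl in H. pose proof (pw_nonneg (Rabs (v K)) q). lra.
Qed.

Lemma conj_exp_cases p : 1 <= p ->
  (p = 1 /\ conj_exp p = Inf) \/ (1 < p /\ conj_exp p = Fin (p / (p - 1))).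
Proof. intros Hp. unfold conj_exp. destruct (Req_dec_T p 1); [left|right]; split; auto; lra. Qed.

Lemma dual_conj_exp p : 1 <= p -> dual_exp (conj_exp p) = p.
Proof.
  intros Hp. destruct (conj_exp_cases p Hp) as [[E1 E2]|[E1 E2]]; rewrite E2; simpl;
    [lra|field; lra].
Qed.

Lemma holder_conj_ball p K (x h : nat -> R) : 1 <= p -> inBall (conj_exp p) x ->
  Rabs (fsum K (fun c => x c * h c)) <= pw (fsum K (fun c => pw (Rabs (h c)) p)) (1 / p).
Proof.
  intros Hp Hx. destruct (conj_exp_cases p Hp) as [[E1 E2]|[E1 E2]]; rewrite E2 in Hx.
  - subst p. replace (1 / 1) with 1 by field.
    rewrite pw_1 by (apply fsum_nonneg; intros; apply pw_nonneg).
    rewrite (fsum_ext K (fun c => pw (Rabs (h c)) 1) (fun c => Rabs (h c)))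
      by (intros; apply pw_1, Rabs_pos).
    apply holder_inf, Hx.
  - apply holder; auto. apply inBall_fin_partial; auto. apply Rdiv_lt_0_compat; lra.
Qed.

(** * Rademacher functions and averages over signs *)

Lemma rad_SS_lower j t : rad (S (S j)) t = rad (S j) (2 * t).
Proof. unfold rad. f_equal. f_equal. simpl. ring. Qed.

Lemma rad_SS_upper j t : rad (S (S j)) t = rad (S j) (2 * t - 1).
Proof.
  unfold rad. f_equal.
  replace (2 ^ S (S j) * PI * t) with (2 ^ S j * PI * (2 * t - 1) + 2 * INR (2 ^ j) * PI).
  { apply sin_period. }
  rewrite pow_INR. replace (INR 2) with 2 by (simpl; ring). simpl. ring.
Qed.

Lemma rad1_lower t : 0 < t < 1 / 2 -> rad 1 t = 1.
Proof.
  intros H. unfold rad, Rsign. destruct Rlt_dec as [_|n]; auto. exfalso; apply n.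
  apply sin_gt_0; simpl; pose proof PI_RGT_0; nra.
Qed.

Lemma rad1_upper t : 1 / 2 < t < 1 -> rad 1 t = -1.
Proof.
  intros H. unfold rad, Rsign. pose proof PI_RGT_0.
  assert (sin (2 ^ 1 * PI * t) < 0).
  { replace (2 ^ 1 * PI * t) with ((2 * PI * t - PI) + PI) by (simpl; ring).
    rewrite neg_sin. assert (0 < sin (2 * PI * t - PI)) by (apply sin_gt_0; nra). lra. }
  destruct Rlt_dec; [lra|]. destruct Rlt_dec; lra.
Qed.

Lemma is_RInt_half (g : R -> R) (l c : R) :
  is_RInt g 0 1 l -> is_RInt (fun x => g (2 * x + c)) (- c / 2) ((1 - c) / 2) (l / 2).
Proof.
  intros H.
  assert (H1 : is_RInt g (2 * (- c / 2) + c) (2 * ((1 - c) / 2) + c) l).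
  { replace (2 * (- c / 2) + c) with 0 by field.
    replace (2 * ((1 - c) / 2) + c) with 1 by field. exact H. }
  apply is_RInt_comp_lin in H1. apply (is_RInt_scal _ _ _ (1 / 2)) in H1.
  eapply is_RInt_ext; [|replace (l / 2) with (scal (1 / 2) l); [exact H1|]].
  - intros x _. cbv [scal]; simpl; cbv [mult]; simpl. field.
  - cbv [scal]; simpl; cbv [mult]; simpl. field.
Qed.

Lemma RInt01_of_is_RInt f l : is_RInt f 0 1 l -> RInt01 f l.
Proof.
  intros H. exists (ex_RInt_Reals_0 f 0 1 (ex_intro _ l H)).
  rewrite <- RInt_Reals. apply is_RInt_unique; auto.
Qed.

Lemma RInt01_unique f I1 I2 : RInt01 f I1 -> RInt01 f I2 -> I1 = I2.
Proof. intros [pr1 E1] [pr2 E2]. rewrite <- E1, <- E2. apply RiemannInt_P5. Qed.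

Definition depends_below (K : nat) (F : (nat -> R) -> R) :=
  forall s s', (forall j, (j < K)%nat -> s j = s' j) -> F s = F s'.

Fixpoint sign_avg (K : nat) (F : (nat -> R) -> R) : R :=
  match K with
  | O => F (fun _ => 0)
  | S K' => (sign_avg K' (fun s => F (scons 1 s)) + sign_avg K' (fun s => F (scons (-1) s))) / 2
  end.

Lemma depends_below_scons K F a :
  depends_below (S K) F -> depends_below K (fun s => F (scons a s)).
Proof. intros H s s' E. apply H. intros [|j] Hj; simpl; auto. apply E; lia. Qed.

(* Self-similarity of the Rademacher system on the two halves of [[0, 1]]. *)
Lemma is_RInt_sign_avg K F : depends_below K F ->
  is_RInt (fun t => F (fun j => rad (S j) t)) 0 1 (sign_avg K F).
Proof.
  revert F; induction K; intros F HF.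
  - simpl. apply is_RInt_ext with (f := fun _ => F (fun _ => 0)).
    + intros x _. apply HF. intros; lia.
    + pose proof (is_RInt_const 0 1 (F (fun _ => 0))) as H.
      cbv [scal] in H; simpl in H; cbv [mult] in H; simpl in H.
      replace ((1 - 0) * F (fun _ => 0)) with (F (fun _ => 0)) in H by ring. exact H.
  - simpl. set (a := sign_avg K (fun s => F (scons 1 s))).
    set (b := sign_avg K (fun s => F (scons (-1) s))).
    replace ((a + b) / 2) with (@plus R_NormedModule (a / 2) (b / 2))
      by (cbv [plus]; simpl; field).
    apply (@is_RInt_Chasles R_NormedModule) with (b := 1 / 2).
    + pose proof (is_RInt_half _ _ 0 (IHK _ (depends_below_scons K F 1 HF))) as H.
      replace (- 0 / 2) with 0 in H by field. replace ((1 - 0) / 2) with (1 / 2) in H by field.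
      eapply is_RInt_ext; [|exact H]. intros x Hx.
      rewrite Rmin_left in Hx by lra. rewrite Rmax_right in Hx by lra.
      apply HF. intros [|j] _; simpl; [symmetry; apply rad1_lower; lra|].
      rewrite rad_SS_lower. f_equal; ring.
    + pose proof (is_RInt_half _ _ (-1) (IHK _ (depends_below_scons K F (-1) HF))) as H.
      replace (- -1 / 2) with (1 / 2) in H by field. replace ((1 - -1) / 2) with 1 in H by field.
      eapply is_RInt_ext; [|exact H]. intros x Hx.
      rewrite Rmin_left in Hx by lra. rewrite Rmax_right in Hx by lra.
      apply HF. intros [|j] _; simpl; [symmetry; apply rad1_upper; lra|].
      rewrite rad_SS_upper. f_equal; ring.
Qed.

Fixpoint sign_avg_rows (m K : nat) (G : (nat -> nat -> R) -> R) : R :=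
  match m with
  | O => G (fun _ _ => 0)
  | S m' => sign_avg K (fun s => sign_avg_rows m' K (fun x => G (scons s x)))
  end.

Definition rows_depend_below (m K : nat) (G : (nat -> nat -> R) -> R) :=
  forall x x', (forall k j, (k < m)%nat -> (j < K)%nat -> x k j = x' k j) -> G x = G x'.

Lemma rows_depend_below_scons m K G s :
  rows_depend_below (S m) K G -> rows_depend_below m K (fun x => G (scons s x)).
Proof. intros H x x' E. apply H. intros [|k] j Hk Hj; simpl; auto. apply E; lia. Qed.

Lemma IterInt_sign_avg_rows m K G : rows_depend_below m K G ->
  IterInt m (fun t => G (fun k j => rad (S j) (t k))) (sign_avg_rows m K G).
Proof.
  revert G; induction m; intros G HG; simpl.
  - apply HG. intros; lia.
  - exists (fun t => sign_avg_rows m K (fun x => G (scons (fun j => rad (S j) t) x))). split.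
    + apply RInt01_of_is_RInt, (is_RInt_sign_avg K (fun s => sign_avg_rows m K (fun x => G (scons s x)))).
      intros s s' E. f_equal. apply functional_extensionality; intros x.
      apply HG. intros [|k] j Hk Hj; simpl; auto.
    + intros t _.
      replace (fun s => G (fun k j => rad (S j) (scons t s k)))
        with (fun s => G (scons (fun j => rad (S j) t) (fun k j => rad (S j) (s k)))).
      * exact (IHm _ (rows_depend_below_scons m K G _ HG)).
      * apply functional_extensionality; intros s. f_equal.
        apply functional_extensionality; intros [|k]; reflexivity.
Qed.

Lemma sign_avg_nonneg K F : (forall s, 0 <= F s) -> 0 <= sign_avg K F.
Proof.
  revert F; induction K; intros F H; simpl; auto.
  pose proof (IHK (fun s => F (scons 1 s)) (fun s => H _)).
  pose proof (IHK (fun s => F (scons (-1) s)) (fun s => H _)). lra.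
Qed.

Lemma sign_avg_mulr K F c : sign_avg K (fun s => F s * c) = sign_avg K F * c.
Proof. revert F; induction K; intros F; simpl; auto. rewrite !IHK. field. Qed.

Lemma sign_avg_rows_mulr m K G c :
  sign_avg_rows m K (fun x => G x * c) = sign_avg_rows m K G * c.
Proof.
  revert G; induction m; intros G; simpl; auto.
  rewrite <- sign_avg_mulr. f_equal. apply functional_extensionality; intros s. apply IHm.
Qed.

Lemma sign_avg_rows_prod m K (h : (nat -> R) -> R) :
  sign_avg_rows m K (fun x => fprod m (fun k => h (x k))) = sign_avg K h ^ m.
Proof.
  induction m; [reflexivity|]. simpl sign_avg_rows.
  rewrite (functional_extensionality _
             (fun s => h s * sign_avg_rows m K (fun x => fprod m (fun k => h (x k))))).
  - rewrite sign_avg_mulr, IHm. simpl. ring.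
  - intros s. rewrite Rmult_comm, <- sign_avg_rows_mulr. f_equal.
    apply functional_extensionality; intros x.
    change (fprod m (fun k => h (scons s x k)) * h (scons s x m))
      with (fprod (S m) (fun k => h (scons s x k))).
    rewrite fprod_S. simpl. ring.
Qed.

Definition bit_signs (c : nat) : nat -> R := fun j => if Nat.testbit c j then -1 else 1.

Lemma bit_signs_even d : bit_signs (2 * d) = scons 1 (bit_signs d).
Proof.
  apply functional_extensionality; intros [|j]; unfold bit_signs; simpl scons.
  - rewrite Nat.testbit_even_0; auto.
  - rewrite Nat.testbit_even_succ by lia; auto.
Qed.

Lemma bit_signs_odd d : bit_signs (2 * d + 1) = scons (-1) (bit_signs d).
Proof.
  apply functional_extensionality; intros [|j]; unfold bit_signs; simpl scons.
  - rewrite Nat.testbit_odd_0; auto.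
  - rewrite Nat.testbit_odd_succ by lia; auto.
Qed.

Lemma bit_signs_pm1 c j : bit_signs c j = 1 \/ bit_signs c j = -1.
Proof. unfold bit_signs; destruct Nat.testbit; auto. Qed.

Lemma sign_avg_bits K F : depends_below K F ->
  sign_avg K F = fsum (2 ^ K) (fun c => F (bit_signs c)) / 2 ^ K.
Proof.
  revert F; induction K; intros F HF.
  - simpl. rewrite (HF _ (bit_signs 0)) by (intros; lia). field.
  - simpl sign_avg. rewrite !IHK by (apply depends_below_scons; auto).
    change (2 ^ S K)%nat with (2 * 2 ^ K)%nat. rewrite fsum_double.
    rewrite (fsum_ext (2 ^ K) (fun d => F (bit_signs (2 * d)%nat) + F (bit_signs (2 * d + 1)%nat))
               (fun d => F (scons 1 (bit_signs d)) + F (scons (-1) (bit_signs d))))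
      by (intros; rewrite bit_signs_even, bit_signs_odd; auto).
    rewrite fsum_plus. change (2 ^ S K) with (2 * 2 ^ K). field. apply pow_nonzero; lra.
Qed.

Definition seq_cat (N : nat) (s s' : nat -> R) : nat -> R :=
  fun j => if Nat.ltb j N then s j else s' (j - N)%nat.

Lemma sign_avg_cat N L F :
  sign_avg (N + L) F = sign_avg N (fun s => sign_avg L (fun s' => F (seq_cat N s s'))).
Proof.
  revert F; induction N; intros F.
  - simpl. f_equal. apply functional_extensionality; intros s'. f_equal.
    apply functional_extensionality; intros j. unfold seq_cat. simpl. f_equal; lia.
  - simpl. rewrite !IHN.
    assert (E : forall a, (fun s => sign_avg L (fun s' => F (scons a (seq_cat N s s')))) =
                          (fun s => sign_avg L (fun s' => F (seq_cat (S N) (scons a s) s')))).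
    { intros a. apply functional_extensionality; intros s. f_equal.
      apply functional_extensionality; intros s'. f_equal.
      apply functional_extensionality; intros [|j]; unfold seq_cat; simpl; auto. }
    rewrite !E. reflexivity.
Qed.

Lemma sign_avg_rows_flatten m K G : rows_depend_below m K G ->
  sign_avg_rows m K G = sign_avg (m * K) (fun s => G (fun k j => s (k * K + j)%nat)).
Proof.
  revert G; induction m; intros G HG; [reflexivity|].
  simpl sign_avg_rows. change (S m * K)%nat with (K + m * K)%nat. rewrite sign_avg_cat.
  f_equal. apply functional_extensionality; intros s.
  rewrite IHm by (apply rows_depend_below_scons; auto).
  f_equal. apply functional_extensionality; intros s'. apply HG.
  intros [|k] j Hk Hj; unfold seq_cat; simpl.
  - rewrite (proj2 (Nat.ltb_lt j K)) by lia. reflexivity.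
  - rewrite (proj2 (Nat.ltb_ge (K + k * K + j) K)) by lia. f_equal; lia.
Qed.

Lemma sign_avg_flip K F (eps : nat -> R) :
  (forall j, (j < K)%nat -> eps j = 1 \/ eps j = -1) ->
  sign_avg K (fun s => F (fun j => eps j * s j)) = sign_avg K F.
Proof.
  revert F eps; induction K; intros F eps He; simpl.
  - f_equal. apply functional_extensionality; intros; ring.
  - assert (E : forall a, sign_avg K (fun s => F (fun j => eps j * scons a s j)) =
                          sign_avg K (fun s => F (scons (eps O * a) s))).
    { intros a.
      rewrite <- (IHK (fun s => F (scons (eps O * a) s)) (fun j => eps (S j)))
        by (intros; apply He; lia).
      f_equal. apply functional_extensionality; intros s. f_equal.
      apply functional_extensionality; intros [|j]; reflexivity. }
    rewrite !E. destruct (He O ltac:(lia)) as [H|H]; rewrite H.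
    + replace (1 * 1) with 1 by ring. replace (1 * -1) with (-1) by ring. reflexivity.
    + replace (-1 * 1) with (-1) by ring. replace (-1 * -1) with 1 by ring. lra.
Qed.

(** * Multi-affine functions on the cube [[-1,1]^(m x N)] *)

Definition set_entry (x : nat -> nat -> R) (k j : nat) (t : R) : nat -> nat -> R :=
  fun k' j' => if (Nat.eqb k' k && Nat.eqb j' j)%bool then t else x k' j'.

Lemma set_entry_cases x k j t k' j' :
  ((k', j') = (k, j) /\ set_entry x k j t k' j' = t) \/
  ((k', j') <> (k, j) /\ set_entry x k j t k' j' = x k' j').
Proof.
  unfold set_entry.
  destruct (Nat.eqb_spec k' k), (Nat.eqb_spec j' j); simpl; subst; auto;
    right; split; auto; congruence.
Qed.

Lemma Rabs_affine_pm1_le t u v B : -1 <= t <= 1 -> Rabs u <= B -> Rabs v <= B ->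
  Rabs ((1 + t) / 2 * u + (1 - t) / 2 * v) <= B.
Proof.
  intros Ht Hu Hv. apply Rabs_le_between in Hu, Hv. apply Rabs_le. split; nra.
Qed.

(* Replace the entries by [+-1] one at a time, following a list of the positions. *)
Lemma multiaffine_cube_bound m N (F : (nat -> nat -> R) -> R) B :
  (forall x k j, (k < m)%nat -> (j < N)%nat ->
     F x = (1 + x k j) / 2 * F (set_entry x k j 1) + (1 - x k j) / 2 * F (set_entry x k j (-1))) ->
  (forall x, (forall k j, (k < m)%nat -> (j < N)%nat -> x k j = 1 \/ x k j = -1) ->
     Rabs (F x) <= B) ->
  forall x, (forall k j, (k < m)%nat -> (j < N)%nat -> Rabs (x k j) <= 1) -> Rabs (F x) <= B.
Proof.
  intros Haff Hvert.
  assert (Hlist : forall l x, (forall k j, (k < m)%nat -> (j < N)%nat -> Rabs (x k j) <= 1) ->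
            (forall k j, (k < m)%nat -> (j < N)%nat -> ~ In (k, j) l -> x k j = 1 \/ x k j = -1) ->
            Rabs (F x) <= B).
  { induction l as [|[k0 j0] l IHl]; intros x Hx Hl.
    - apply Hvert. intros k j Hk Hj. apply Hl; auto.
    - assert (Hset : forall t, t = 1 \/ t = -1 -> Rabs (F (set_entry x k0 j0 t)) <= B).
      { intros t Ht. apply IHl; intros k j Hk Hj.
        all: destruct (set_entry_cases x k0 j0 t k j) as [[E ->]|[E ->]].
        - apply Rabs_le. destruct Ht as [->| ->]; lra.
        - auto.
        - auto.
        - intros Hn. apply Hl; auto. intros [E'|E']; [congruence|auto]. }
      destruct (Nat.lt_ge_cases k0 m), (Nat.lt_ge_cases j0 N).
      2-4: apply IHl; auto; intros k j Hk Hj Hn; apply Hl; auto; intros [E|E]; [|auto];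
           injection E as -> ->; lia.
      rewrite Haff with (k := k0) (j := j0) by auto.
      apply Rabs_affine_pm1_le; [apply Rabs_le_between, Hx; auto|apply Hset; auto..]. }
  intros x Hx. apply (Hlist (list_prod (seq 0 m) (seq 0 N))); auto.
  intros k j Hk Hj Hn. exfalso. apply Hn, in_prod; apply in_seq; lia.
Qed.

(** * The test form *)

(* Entry [k N + j] of [s] plays the role of the Rademacher value [r_(j+1)(t_k)]. *)
Definition sign_chaos (m N : nat) (y : (nat -> nat) -> R) (s : nat -> R) (z : nat -> nat -> R) : R :=
  msum m N (fun i => fprod m (fun k => s (k * N + i k)%nat * z k (i k)) * y i).

Definition sign_weight (p : R) (m N : nat) : R := Rpower (/ 2 ^ (m * N)) (1 / p).

Definition test_form (p : R) (m N : nat) (y : (nat -> nat) -> R) (x : nat -> nat -> R) : R :=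
  fsum (2 ^ (m * N)) (fun c =>
    x O c * (sign_weight p m N * sign_chaos m N y (bit_signs c) (fun k => x (S k)))).

Definition chaos_abs_pow (p : R) (m N : nat) (y : (nat -> nat) -> R) (s : nat -> R) : R :=
  pw (Rabs (sign_chaos m N y s (fun _ _ => 1))) p.

Definition chaos_Lp_norm (p : R) (m N : nat) (y : (nat -> nat) -> R) : R :=
  pw (sign_avg (m * N) (chaos_abs_pow p m N y)) (1 / p).

Lemma pw_sign_weight p m N : 0 < p -> pw (sign_weight p m N) p = / 2 ^ (m * N).
Proof.
  intros Hp. unfold sign_weight. rewrite pw_pos by apply exp_pos. rewrite Rpower_mult.
  replace (1 / p * p) with 1 by (field; lra). apply Rpower_1.
  apply Rinv_0_lt_compat, pow_lt; lra.
Qed.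

Lemma sign_weight_pos p m N : 0 < sign_weight p m N.
Proof. apply exp_pos. Qed.

Lemma test_form_ext p m N y x x' :
  (forall j, (j < S m)%nat -> x j = x' j) -> test_form p m N y x = test_form p m N y x'.
Proof.
  intros H. unfold test_form. apply fsum_ext; intros c _. rewrite (H O) by lia.
  f_equal. f_equal. unfold sign_chaos. apply msum_ext; intros i _ _. f_equal.
  apply fprod_ext; intros k Hk. rewrite (H (S k)) by lia. auto.
Qed.

Lemma test_form_lin p m N y (j : nat) (x : nat -> nat -> R) (u v : nat -> R) (a b : R) :
  (j < S m)%nat ->
  test_form p m N y (upd x j (fun i => a * u i + b * v i)) =
  a * test_form p m N y (upd x j u) + b * test_form p m N y (upd x j v).
Proof.
  intros Hj. unfold test_form. rewrite <- fsum_lin. apply fsum_ext; intros c _.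
  destruct j as [|j0]; unfold upd; simpl; [ring|]. unfold sign_chaos.
  rewrite (msum_ext m N _ (fun i =>
      a * (fprod m (fun k => bit_signs c (k * N + i k)%nat * (if Nat.eqb k j0 then u else x (S k)) (i k)) * y i)
    + b * (fprod m (fun k => bit_signs c (k * N + i k)%nat * (if Nat.eqb k j0 then v else x (S k)) (i k)) * y i))).
  - rewrite msum_lin. ring.
  - intros i _ _. rewrite (fprod_affine m j0 _
      (fun k => bit_signs c (k * N + i k)%nat * (if Nat.eqb k j0 then u else x (S k)) (i k))
      (fun k => bit_signs c (k * N + i k)%nat * (if Nat.eqb k j0 then v else x (S k)) (i k)) a b);
      [ring|lia| |].
    + intros k _ Hk. rewrite (proj2 (Nat.eqb_neq k j0) Hk). auto.
    + rewrite Nat.eqb_refl. ring.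
Qed.

Lemma test_form_multilinear p m N y q : multilinear (S m) q (test_form p m N y).
Proof. split; intros; [apply test_form_ext|apply test_form_lin]; auto. Qed.

Lemma test_form_entry_affine p m N y x0 x k j : (k < m)%nat ->
  test_form p m N y (scons x0 x) =
  (1 + x k j) / 2 * test_form p m N y (scons x0 (set_entry x k j 1)) +
  (1 - x k j) / 2 * test_form p m N y (scons x0 (set_entry x k j (-1))).
Proof.
  intros Hk.
  assert (Hrow : forall t, scons x0 (set_entry x k j t) = upd (scons x0 x) (S k) (set_entry x k j t k)).
  { intros t. apply functional_extensionality; intros [|k']; unfold upd; simpl; auto.
    destruct (Nat.eqb_spec k' k); subst; auto.
    apply functional_extensionality; intros j'.
    destruct (set_entry_cases x k j t k' j') as [[E _]|[_ ->]]; congruence. }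
  rewrite !Hrow, <- test_form_lin by lia. f_equal.
  apply functional_extensionality; intros [|k']; unfold upd; simpl; auto.
  destruct (Nat.eqb_spec k' k); subst; auto.
  apply functional_extensionality; intros j'.
  destruct (set_entry_cases x k j 1 k j') as [[E1 ->]|[E1 ->]];
  destruct (set_entry_cases x k j (-1) k j') as [[E2 ->]|[E2 ->]]; try congruence.
  - injection E1 as ->. field.
  - field.
Qed.

Lemma divmod_block N k j : (j < N)%nat -> ((k * N + j) / N = k /\ (k * N + j) mod N = j)%nat.
Proof.
  intros H. split.
  - symmetry. apply Nat.div_unique with j; auto. lia.
  - symmetry. apply Nat.mod_unique with k; auto. lia.
Qed.

Lemma sign_chaos_flatten m N y s (z : nat -> nat -> R) :
  sign_chaos m N y s z = sign_chaos m N y (fun j => z (j / N)%nat (j mod N)%nat * s j) (fun _ _ => 1).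
Proof.
  unfold sign_chaos. apply msum_ext; intros i Hi _. f_equal. apply fprod_ext; intros k Hk.
  destruct (divmod_block N k (i k) (Hi k Hk)) as [-> ->]. ring.
Qed.

Lemma chaos_abs_pow_depends_below p m N y (eps : nat -> R) :
  depends_below (m * N) (fun s => chaos_abs_pow p m N y (fun j => eps j * s j)).
Proof.
  intros s s' E. unfold chaos_abs_pow, sign_chaos. f_equal. f_equal.
  apply msum_ext; intros i Hi _. f_equal. apply fprod_ext; intros k Hk.
  rewrite E; auto. specialize (Hi k Hk). nia.
Qed.

Lemma test_form_vertex_bound p m N y x0 x : 1 <= p -> inBall (conj_exp p) x0 ->
  (forall k j, (k < m)%nat -> (j < N)%nat -> x k j = 1 \/ x k j = -1) ->
  Rabs (test_form p m N y (scons x0 x)) <= chaos_Lp_norm p m N y.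
Proof.
  intros Hp Hx0 Hx. unfold test_form. simpl scons.
  eapply Rle_trans; [apply holder_conj_ball; eauto|]. right. unfold chaos_Lp_norm. f_equal.
  set (eps := fun j => x (j / N)%nat (j mod N)%nat).
  rewrite <- (sign_avg_flip (m * N) (chaos_abs_pow p m N y) eps).
  2:{ intros j Hj. unfold eps. assert (N <> 0%nat) by (intro; subst; lia).
      apply Hx; [apply Nat.Div0.div_lt_upper_bound; lia|apply Nat.mod_upper_bound; auto]. }
  rewrite sign_avg_bits by apply chaos_abs_pow_depends_below.
  rewrite (fsum_ext _ _ (fun c => / 2 ^ (m * N) * chaos_abs_pow p m N y (fun j => eps j * bit_signs c j))).
  - rewrite fsum_scal. field. apply pow_nonzero; lra.
  - intros c _. rewrite Rabs_mult, pw_mult by apply Rabs_pos.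
    rewrite (Rabs_right (sign_weight p m N)) by (left; apply sign_weight_pos).
    rewrite pw_sign_weight by lra. unfold chaos_abs_pow. rewrite sign_chaos_flatten. reflexivity.
Qed.

Lemma test_form_bound p m N y x : 1 <= p ->
  (forall j, (j < S m)%nat -> inBall (slot (conj_exp p) j) (x j)) ->
  Rabs (test_form p m N y x) <= chaos_Lp_norm p m N y.
Proof.
  intros Hp Hx.
  replace x with (scons (x O) (fun k => x (S k)))
    by (apply functional_extensionality; intros [|k]; reflexivity).
  apply (multiaffine_cube_bound m N (fun z => test_form p m N y (scons (x O) z))).
  - intros z k j Hk _. apply test_form_entry_affine; auto.
  - intros z Hz. apply test_form_vertex_bound; auto. apply (Hx O); lia.
  - intros k j Hk _. apply (Hx (S k)); lia.
Qed.

Lemma test_form_basis p m N y i1 (i' : nat -> nat) : (forall k, (m <= k)%nat -> i' k = O) ->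
  test_form p m N y (fun j => e (scons i1 i' j)) =
  ind_lt (2 ^ (m * N)) i1 * (sign_weight p m N * (fprod m (fun k => ind_lt N (i' k)) *
    (fprod m (fun k => bit_signs i1 (k * N + i' k)%nat) * y i'))).
Proof.
  intros Hz. unfold test_form. simpl scons. rewrite fsum_delta. fold (ind_lt (2 ^ (m * N)) i1).
  f_equal. f_equal. unfold sign_chaos.
  rewrite <- (msum_delta m N i' (fun i => fprod m (fun k => bit_signs i1 (k * N + i' k)%nat) * y i))
    by auto.
  apply msum_ext; intros i _ _.
  rewrite (fprod_ext m _ (fun k => e (i' k) (i k) * bit_signs i1 (k * N + i' k)%nat)).
  - rewrite fprod_mult. ring.
  - intros k _. unfold e. destruct (Nat.eqb_spec (i k) (i' k)) as [->|]; ring.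
Qed.

Lemma fprod_ind_lt_01 m N (i' : nat -> nat) :
  fprod m (fun k => ind_lt N (i' k)) = 0 \/ fprod m (fun k => ind_lt N (i' k)) = 1.
Proof. apply fprod_01; intros; apply ind_lt_01. Qed.

Lemma mixed_trunc_test_form p m N y : 1 <= p ->
  mixed_trunc (S m) (conj_exp p) (test_form p m N y) (2 ^ (m * N) + N) =
  sqrt (msum m N (fun i => Rabs (y i) ^ 2)).
Proof.
  intros Hp. unfold mixed_trunc. cbv zeta. rewrite dual_conj_exp by auto.
  replace (S m - 1)%nat with m by lia.
  rewrite pw_half by (apply msum_nonneg; intros; apply pw_nonneg).
  f_equal. rewrite <- (msum_ind_lt m (2 ^ (m * N) + N) N) by lia.
  apply msum_ext; intros i' _ Hz.
  pose proof (fprod_ind_lt_01 m N i') as H01.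
  assert (H0 : 0 <= fprod m (fun k => ind_lt N (i' k))) by (destruct H01 as [-> | ->]; lra).
  rewrite (fsum_ext _ _ (fun i1 => ind_lt (2 ^ (m * N)) i1 *
             (/ 2 ^ (m * N) * (fprod m (fun k => ind_lt N (i' k)) * pw (Rabs (y i')) p)))).
  - rewrite fsum_ind_lt, fsum_const by lia. rewrite pow_INR. replace (INR 2) with 2 by (simpl; ring).
    replace (2 ^ (m * N) * (/ 2 ^ (m * N) * (fprod m (fun k => ind_lt N (i' k)) * pw (Rabs (y i')) p)))
      with (fprod m (fun k => ind_lt N (i' k)) * pw (Rabs (y i')) p)
      by (field; apply pow_nonzero; lra).
    rewrite pw_01_mult, pw_pw by (auto; apply Rabs_pos).
    replace (p * (2 / p)) with 2 by (field; lra). rewrite pw_2 by apply Rabs_pos. reflexivity.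
  - intros i1 _. rewrite test_form_basis by auto. rewrite !Rabs_mult.
    rewrite (Rabs_right (ind_lt _ i1)) by (destruct (ind_lt_01 (2 ^ (m * N)) i1) as [-> | ->]; lra).
    rewrite (Rabs_right (sign_weight p m N)) by (left; apply sign_weight_pos).
    rewrite (Rabs_right (fprod m (fun k => ind_lt N (i' k)))) by lra.
    rewrite fprod_sign, Rmult_1_l by (intros; apply bit_signs_pm1).
    rewrite pw_01_mult by apply ind_lt_01.
    rewrite pw_mult by (try (left; apply sign_weight_pos); apply Rmult_le_pos; auto; apply Rabs_pos).
    rewrite pw_sign_weight, pw_01_mult by (auto; lra). reflexivity.
Qed.

Lemma zero_inBall q : inBall q (fun _ => 0).
Proof.
  destruct q; simpl.
  - exists 0. split; [|lra]. intros eps He. exists O. intros n _. unfold Rdist.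
    replace (sum_f_R0 (fun k => pw (Rabs 0) q) n) with 0.
    + rewrite Rminus_0_r, Rabs_R0. lra.
    + rewrite Rabs_R0, pw_0, <- fsum_sum_f_R0, fsum_const. ring.
  - split; [|intros; rewrite Rabs_R0; lra].
    intros eps He. exists O. intros n _. unfold Rdist. rewrite Rminus_0_r, Rabs_R0. lra.
Qed.

Lemma test_form_norm p m N y : 1 <= p ->
  exists s, normT (S m) (conj_exp p) (test_form p m N y) s /\ 0 <= s <= chaos_Lp_norm p m N y.
Proof.
  intros Hp.
  set (E := fun v => exists x, (forall j, (j < S m)%nat -> inBall (slot (conj_exp p) j) (x j)) /\
                               v = Rabs (test_form p m N y x)).
  assert (HB : forall v, E v -> v <= chaos_Lp_norm p m N y)
    by (intros v [x [Hx ->]]; apply test_form_bound; auto).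
  assert (H0 : E (Rabs (test_form p m N y (fun _ _ => 0))))
    by (exists (fun _ _ => 0); split; auto; intros; apply zero_inBall).
  destruct (completeness E (ex_intro _ _ HB) (ex_intro _ _ H0)) as [s Hs].
  exists s. split; [exact Hs|split].
  - eapply Rle_trans; [apply Rabs_pos|]. apply (proj1 Hs), H0.
  - apply (proj2 Hs). exact HB.
Qed.

Lemma D_valid_l2_le_norm p m N y D s : 1 <= p -> D_valid (S m) (conj_exp p) D ->
  normT (S m) (conj_exp p) (test_form p m N y) s ->
  sqrt (msum m N (fun i => Rabs (y i) ^ 2)) <= D * s.
Proof.
  intros Hp HD Hs. rewrite <- (mixed_trunc_test_form p m N y Hp).
  apply HD; auto.
  - apply test_form_multilinear.
  - exists (chaos_Lp_norm p m N y). intros x Hx. apply test_form_bound; auto.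
Qed.

Lemma D_valid_pos p m D : 1 <= p -> D_valid (S m) (conj_exp p) D -> 0 < D.
Proof.
  intros Hp HD. destruct (test_form_norm p m 1 (fun _ => 1) Hp) as [s [Hs [Hs0 _]]].
  pose proof (D_valid_l2_le_norm p m 1 (fun _ => 1) D s Hp HD Hs) as H.
  rewrite (msum_ext m 1 _ (fun _ => 1)) in H by (intros; rewrite Rabs_R1; ring).
  rewrite msum_const1, sqrt_1 in H. destruct (Rle_dec D 0); [|lra]. nra.
Qed.

Lemma D_valid_l2_le_chaos p m N y D : 1 <= p -> D_valid (S m) (conj_exp p) D ->
  sqrt (msum m N (fun i => Rabs (y i) ^ 2)) <= D * chaos_Lp_norm p m N y.
Proof.
  intros Hp HD. destruct (test_form_norm p m N y Hp) as [s [Hs [_ Hle]]].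
  eapply Rle_trans; [apply (D_valid_l2_le_norm p m N y D s); auto|].
  apply Rmult_le_compat_l; auto. left. apply (D_valid_pos p m D); auto.
Qed.

Definition tensor_abs_pow (p : R) (m N : nat) (y : (nat -> nat) -> R) (x : nat -> nat -> R) : R :=
  pw (Rabs (msum m N (fun i => fprod m (fun k => x k (i k)) * y i))) p.

Lemma tensor_abs_pow_depends_below p m N y : rows_depend_below m N (tensor_abs_pow p m N y).
Proof.
  intros x x' E. unfold tensor_abs_pow. f_equal. f_equal. apply msum_ext; intros i Hi _.
  f_equal. apply fprod_ext; intros k Hk. apply E; auto.
Qed.

Lemma sign_avg_rows_tensor_abs_pow p m N y :
  sign_avg_rows m N (tensor_abs_pow p m N y) = sign_avg (m * N) (chaos_abs_pow p m N y).
Proof.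
  rewrite sign_avg_rows_flatten by apply tensor_abs_pow_depends_below.
  f_equal. apply functional_extensionality; intros s.
  unfold tensor_abs_pow, chaos_abs_pow, sign_chaos. f_equal. f_equal.
  apply msum_ext; intros i _ _. f_equal. apply fprod_ext; intros; ring.
Qed.

Lemma rademacher_chaos_l2_le p m D : 1 <= p -> D_valid (S m) (conj_exp p) D ->
  forall N y,
  IterInt m (fun t => tensor_abs_pow p m N y (fun k j => rad (S j) (t k)))
    (sign_avg_rows m N (tensor_abs_pow p m N y)) /\
  sqrt (msum m N (fun i => Rabs (y i) ^ 2)) <= D * pw (sign_avg_rows m N (tensor_abs_pow p m N y)) (1 / p).
Proof.
  intros Hp HD N y. split.
  - apply IterInt_sign_avg_rows, tensor_abs_pow_depends_below.
  - rewrite sign_avg_rows_tensor_abs_pow. apply D_valid_l2_le_chaos; auto.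
Qed.

(** * Consequence for the Khintchine constant *)

Lemma pow_le_reg_l u v n : 0 <= u -> 0 <= v -> u ^ S n <= v ^ S n -> u <= v.
Proof.
  intros Hu Hv H. destruct (Rle_dec u v) as [|Hlt]; auto. exfalso.
  assert (Hlt' : v < u) by lra. clear Hlt.
  assert (Hpow : forall k, v ^ S k < u ^ S k).
  { induction k; [simpl; lra|].
    change (v * v ^ S k < u * u ^ S k). pose proof (pow_le v (S k) Hv). nra. }
  specialize (Hpow n). lra.
Qed.

Lemma tensor_abs_pow_product p m n (a : nat -> R) x :
  tensor_abs_pow p m n (fun i => fprod m (fun k => a (S (i k)))) x =
  fprod m (fun k => pw (Rabs (fsum n (fun j => a (S j) * x k j))) p).
Proof.
  unfold tensor_abs_pow.
  rewrite (msum_ext m n _ (fun i => fprod m (fun k => x k (i k) * a (S (i k)))))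
    by (intros; rewrite fprod_mult; auto).
  rewrite (msum_prod m n (fun k j => x k j * a (S j))), fprod_abs, pw_fprod
    by (intros; apply Rabs_pos).
  apply fprod_ext; intros k _. f_equal. f_equal. apply fsum_ext; intros; ring.
Qed.

Lemma msum_sq_product m n (a : nat -> R) :
  msum m n (fun i => Rabs (fprod m (fun k => a (S (i k)))) ^ 2) = fsum n (fun j => a (S j) ^ 2) ^ m.
Proof.
  rewrite (msum_ext m n _ (fun i => fprod m (fun k => a (S (i k)) ^ 2))).
  - rewrite (msum_prod m n (fun k j => a (S j) ^ 2)). apply fprod_const.
  - intros i _ _. rewrite pow2_abs. simpl. rewrite Rmult_1_r, <- fprod_mult.
    apply fprod_ext; intros; ring.
Qed.

Lemma A_valid_ge1 p A : 1 <= p -> A_valid p A -> 1 <= A.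
Proof.
  intros Hp HA.
  set (h := fun s : nat -> R => pw (Rabs (fsum 1 (fun k => 1 * s k))) p).
  assert (Hd : depends_below 1 h) by (intros s s' E; unfold h; simpl; rewrite E by lia; auto).
  pose proof (HA 1%nat (fun _ => 1) _ (RInt01_of_is_RInt _ _ (is_RInt_sign_avg 1 h Hd))) as H.
  assert (Hv : sign_avg 1 h = 1).
  { simpl. unfold h. simpl. replace (0 + 1 * 1) with 1 by ring.
    replace (0 + 1 * -1) with (-1) by ring.
    replace (Rabs (-1)) with 1 by (rewrite Rabs_left; lra).
    rewrite Rabs_R1, pw_pos, Rpower_1_l by lra. field. }
  rewrite Hv in H. simpl fsum in H. replace (0 + 1 * (1 * 1)) with 1 in H by ring.
  rewrite sqrt_1, pw_pos, Rpower_1_l in H by lra. lra.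
Qed.

Lemma A_valid_root p m D : 1 <= p -> (1 <= m)%nat -> D_valid (S m) (conj_exp p) D ->
  A_valid p (Rpower D (/ INR m)).
Proof.
  intros Hp Hm HD n a I HI. set (d := Rpower D (/ INR m)).
  set (h := fun s : nat -> R => pw (Rabs (fsum n (fun k => a (S k) * s k))) p).
  assert (Hdh : depends_below n h)
    by (intros s s' E; unfold h; do 2 f_equal; apply fsum_ext; intros; rewrite E; auto).
  assert (EI : I = sign_avg n h)
    by exact (RInt01_unique _ _ _ HI (RInt01_of_is_RInt _ _ (is_RInt_sign_avg n h Hdh))).
  assert (Hdm : d ^ m = D).
  { assert (0 < INR m) by (apply lt_0_INR; lia).
    unfold d. rewrite <- Rpower_pow by apply exp_pos. rewrite Rpower_mult.
    replace (/ INR m * INR m) with 1 by (field; lra).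
    apply Rpower_1, (D_valid_pos p m D Hp HD). }
  destruct (rademacher_chaos_l2_le p m D Hp HD n (fun i => fprod m (fun k => a (S (i k)))))
    as [_ H].
  rewrite msum_sq_product in H.
  replace (tensor_abs_pow p m n (fun i => fprod m (fun k => a (S (i k)))))
    with (fun x => fprod m (fun k => h (x k))) in H
    by (apply functional_extensionality; intros x; rewrite tensor_abs_pow_product; reflexivity).
  rewrite sign_avg_rows_prod, <- EI in H.
  assert (HI0 : 0 <= I) by (rewrite EI; apply sign_avg_nonneg; intros; apply pw_nonneg).
  rewrite sqrt_pow, pw_pow, <- Hdm, <- Rpow_mult_distr in H
    by (auto; apply fsum_nonneg; intros; apply pow2_ge_0).
  destruct m as [|m']; [lia|].
  apply (pow_le_reg_l _ _ m'); auto; [apply sqrt_pos|].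
  apply Rmult_le_pos; [left; apply exp_pos|apply pw_nonneg].
Qed.

Theorem theorem4p3 (p : R) (m : nat) (D : R) :
  1 <= p <= 2 -> (2 <= m)%nat ->
  D_opt (S m) (conj_exp p) D ->
  (forall (N : nat) (y : (nat -> nat) -> R),
     exists I : R,
       IterInt m (fun t => pw (Rabs (msum m N (fun i =>
                    fprod m (fun k => rad (S (i k)) (t k)) * y i))) p) I /\
       sqrt (msum m N (fun i => Rabs (y i) ^ 2)) <= D * pw I (1 / p)) /\
  (forall A, A_opt p A -> A ^ m <= D).
Proof.
  intros Hp Hm [HD _]. assert (Hp1 : 1 <= p) by lra. split.
  - intros N y. exists (sign_avg_rows m N (tensor_abs_pow p m N y)).
    apply (rademacher_chaos_l2_le p m D Hp1 HD N y).
  - intros A [HA HAmin].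
    assert (Hd : A <= Rpower D (/ INR m)) by (apply HAmin, A_valid_root; auto; lia).
    pose proof (A_valid_ge1 p A Hp1 HA).
    replace D with (Rpower D (/ INR m) ^ m).
    + apply pow_incr. lra.
    + rewrite <- Rpower_pow, Rpower_mult by apply exp_pos.
      replace (/ INR m * INR m) with 1 by (field; apply not_0_INR; lia).
      apply Rpower_1, (D_valid_pos p m D Hp1 HD).
Qed.
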